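(* Let $n\ge2$, and let $m$ and $I$ be as follows: $n-1=\sum_{i=0}^m p_i2^i$ with $p_i\in\{0,1\}$, $p_m=1$, $I=\{i\mid p_i=1\}$. (1) The finite set of formulas $\{\,y_0\equiv\neg q_{1/n},\ \bigwedge_{i=1}^m (y_i\equiv y_{i-1}^2),\ q_{1/n}\equiv\prod_{i\in I}y_i\,\}$ implicitly defines $1/n$ in the variable $q_{1/n}$ in the standard MV-algebra $[0,1]_{\text{Ł}}$ (i.e. it is satisfiable there, and every valuation giving all its members value $1$ gives $q_{1/n}$ value $1/n$). (2) The size of this set of formulas is polynomial in the binary size of $n$ (i.e. in $\log n$).
   Context: Standard MV-algebra $[0,1]_{\text{Ł}}$: $x\cdot y=\max(0,x+y-1)$, $\neg x=1-x$, $x\land y=\min(x,y)$, $x\equiv y=1-|x-y|$. Powers and $\prod$ refer to $\cdot$. $q_{1/n},y_0,\dots,y_m$ are distinct propositional variables. *)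

From Stdlib Require Import Reals Lra Lia Arith List.
Import ListNotations.
Open Scope R_scope.

Inductive var : Type :=
| VQ : var
| VY : nat -> var.

Inductive form : Type :=
| FVar  : var -> form
| FTop  : form
| FNeg  : form -> form
| FMul  : form -> form -> form
| FMeet : form -> form -> form
| FEqv  : form -> form -> form.

Fixpoint eval (e : var -> R) (f : form) : R :=
  match f with
  | FVar v => e v
  | FTop => 1
  | FNeg g => 1 - eval e g
  | FMul g h => Rmax 0 (eval e g + eval e h - 1)
  | FMeet g h => Rmin (eval e g) (eval e h)
  | FEqv g h => 1 - Rabs (eval e g - eval e h)
  end.

Definition valuation (e : var -> R) : Prop := forall v, 0 <= e v <= 1.

Fixpoint big_meet (l : list form) : form :=
  match l with
  | [] => FTop
  | [f] => f
  | f :: l' => FMeet f (big_meet l')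
  end.

Fixpoint big_mul (l : list form) : form :=
  match l with
  | [] => FTop
  | [f] => f
  | f :: l' => FMul f (big_mul l')
  end.

(* Binary expansion of n-1: p_i = testbit (n-1) i, m = floor(log2 (n-1)),
   I = { i <= m | p_i = 1 }. *)
Definition mm (n : nat) : nat := Nat.log2 (n - 1).
Definition II (n : nat) : list nat :=
  filter (fun i => Nat.testbit (n - 1) i) (seq 0 (S (mm n))).

Definition y (i : nat) : form := FVar (VY i).
Definition q : form := FVar VQ.

Definition Phi (n : nat) : list form :=
  [ FEqv (y 0) (FNeg q);
    big_meet (map (fun i => FEqv (y i) (FMul (y (i - 1)) (y (i - 1))))
                  (seq 1 (mm n)));
    FEqv q (big_mul (map y (II n))) ].

Definition implicitly_defines (Gamma : list form) (r : R) (v : var) : Prop :=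
  (exists e, valuation e /\ forall f, In f Gamma -> eval e f = 1) /\
  (forall e, valuation e -> (forall f, In f Gamma -> eval e f = 1) -> e v = r).

(* Size of a formula: number of symbols, where a variable y_i costs
   1 + (number of binary digits of its index). *)
Definition var_size (v : var) : nat :=
  match v with VQ => 1%nat | VY i => S (Nat.log2 (S i)) end.

Fixpoint fsize (f : form) : nat :=
  match f with
  | FVar v => var_size v
  | FTop => 1
  | FNeg g => S (fsize g)
  | FMul g h | FMeet g h | FEqv g h => S (fsize g + fsize h)
  end.

Definition set_size (l : list form) : nat := fold_right (fun f s => fsize f + s)%nat 0%nat l.

(* Under a model of [Phi n] with [q_{1/n} = x], the squaring chain forces
   [y_i = max(0, 1 - 2^i x)], so the Łukasiewicz product of the [y_i] with
   [i ∈ I] is [max(0, 1 - (Σ_{i∈I} 2^i) x) = max(0, 1 - (n-1) x)].  The last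
   formula then reads [x = max(0, 1 - (n-1) x)], whose only solution in
   [[0,1]] is [x = 1/n].  Conversely the valuation [x = 1/n],
   [y_i = max(0, 1 - 2^i/n)] is a model.  Each of the [m + 1 <= log2 n + 1]
   variables has a name of size [O(log n)], so [Phi n] has size
   [O((log n)^2)]. *)

From Stdlib Require Import Reals Lra Lia Arith List.
Open Scope R_scope.

Ltac case_Rmax :=
  unfold Rmax, Rmin in *;
  repeat match goal with
  | |- context [Rle_dec ?a ?b] => destruct (Rle_dec a b)
  | H : context [Rle_dec ?a ?b] |- _ => destruct (Rle_dec a b)
  end.

Lemma eval_eqv_one (e : var -> R) (f g : form) : eval e (FEqv f g) = 1 <-> eval e f = eval e g.
Proof.
  cbn [eval]; split; intros H; [split_Rabs; lra | rewrite H, Rminus_diag, Rabs_R0; ring].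
Qed.

Lemma luk_mul_trunc (c d : R) : 0 <= c -> 0 <= d ->
  Rmax 0 (Rmax 0 (1 - c) + Rmax 0 (1 - d) - 1) = Rmax 0 (1 - (c + d)).
Proof. intros; case_Rmax; lra. Qed.

Lemma eval_unit_interval (e : var -> R) (f : form) :
  valuation e -> 0 <= eval e f <= 1.
Proof.
  intros He; induction f; cbn [eval]; try lra; [apply He | ..];
    case_Rmax; try split_Rabs; lra.
Qed.

Lemma eval_big_meet_one (e : var -> R) (l : list form) : valuation e ->
  eval e (big_meet l) = 1 <-> forall f, In f l -> eval e f = 1.
Proof.
  intros He; induction l as [|f l IH]; [cbn; tauto|].
  destruct l as [|g l].
  - cbn; split; [intros H h [<-|[]]; exact H | auto].
  - change (big_meet (f :: g :: l)) with (FMeet f (big_meet (g :: l))); cbn [eval].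
    pose proof (eval_unit_interval e f He) as Hf.
    pose proof (eval_unit_interval e (big_meet (g :: l)) He) as Hl.
    split.
    + intros H h [<-|Hh]; [|apply IH; [|exact Hh]]; case_Rmax; lra.
    + intros H. rewrite (H f (or_introl eq_refl)), (proj2 IH) by (intros h Hh; apply H; right; exact Hh).
      case_Rmax; lra.
Qed.

Lemma fold_Rplus_nonneg (l : list R) :
  (forall c, In c l -> 0 <= c) -> 0 <= fold_right Rplus 0 l.
Proof.
  induction l as [|c l IH]; intros H; cbn; [lra|].
  pose proof (H c (or_introl eq_refl)); pose proof (IH (fun c' Hc => H c' (or_intror Hc))).
  lra.
Qed.

Lemma eval_big_mul_trunc {A : Type} (e : var -> R) (F : A -> form) (c : A -> R)
    (l : list A) :
  (forall a, In a l -> 0 <= c a /\ eval e (F a) = Rmax 0 (1 - c a)) ->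
  eval e (big_mul (map F l)) = Rmax 0 (1 - fold_right Rplus 0 (map c l)).
Proof.
  induction l as [|a l IH]; intros H; [cbn; case_Rmax; lra|].
  destruct (H a (or_introl eq_refl)) as [Ha Hfa].
  destruct l as [|b l]; [cbn; rewrite Hfa; f_equal; ring|].
  change (Rmax 0 (eval e (F a) + eval e (big_mul (map F (b :: l))) - 1)
          = Rmax 0 (1 - (c a + fold_right Rplus 0 (map c (b :: l))))).
  rewrite Hfa, IH by (intros a' Ha'; apply H; right; exact Ha').
  apply luk_mul_trunc; [exact Ha|].
  apply fold_Rplus_nonneg; intros c' Hc'.
  apply in_map_iff in Hc' as [a' [<- Ha']]; apply H; right; exact Ha'.
Qed.

Lemma luk_squares_closed_form (u : nat -> R) (x : R) (m : nat) : 0 <= x <= 1 ->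
  (u 0%nat = 1 - x /\
   forall i, (1 <= i <= m)%nat -> u i = Rmax 0 (u (i - 1)%nat + u (i - 1)%nat - 1)) <->
  (forall i, (i <= m)%nat -> u i = Rmax 0 (1 - 2 ^ i * x)).
Proof.
  intros Hx.
  assert (Hdouble : forall i, Rmax 0 (Rmax 0 (1 - 2 ^ i * x) + Rmax 0 (1 - 2 ^ i * x) - 1)
                              = Rmax 0 (1 - 2 ^ S i * x)).
  { intros i. pose proof (pow_le 2 i ltac:(lra)).
    rewrite luk_mul_trunc by nra. f_equal; cbn; ring. }
  split.
  - intros [H0 Hstep] i. induction i as [|i IH]; intros Hi.
    + rewrite H0; cbn; case_Rmax; lra.
    + rewrite Hstep by lia. replace (S i - 1)%nat with i by lia.
      rewrite IH by lia. apply Hdouble.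
  - intros H. split.
    + rewrite H by lia. cbn; case_Rmax; lra.
    + intros [|i] Hi; [lia|]. replace (S i - 1)%nat with i by lia.
      rewrite !H by lia. symmetry; apply Hdouble.
Qed.

Lemma luk_fixpoint_inv (x r : R) : 0 <= x -> 1 <= r ->
  x = Rmax 0 (1 - (r - 1) * x) <-> x = 1 / r.
Proof.
  intros Hx Hr. split; intros H.
  - revert H; case_Rmax; intros H; [field_simplify_eq; lra | subst; lra].
  - assert (x * r = 1) by (rewrite H; field; lra).
    case_Rmax; nra.
Qed.

Lemma sum_pow2_testbit (a k : nat) :
  list_sum (map (Nat.pow 2) (filter (Nat.testbit a) (seq 0 k))) = (a mod 2 ^ k)%nat.
Proof.
  induction k as [|k IH]; [symmetry; apply Nat.mod_1_r|].
  rewrite seq_S, filter_app, map_app, list_sum_app, IH, Nat.pow_succ_r',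
    Nat.mul_comm, Nat.Div0.mod_mul_r, <- Nat.testbit_spec'.
  cbn; destruct (Nat.testbit a k); cbn; lia.
Qed.

Lemma sum_pow2_II (n : nat) : (2 <= n)%nat -> list_sum (map (Nat.pow 2) (II n)) = (n - 1)%nat.
Proof.
  intros Hn. unfold II, mm. rewrite sum_pow2_testbit.
  apply Nat.mod_small, Nat.log2_spec; lia.
Qed.

Lemma In_II_le (n i : nat) : In i (II n) -> (i <= mm n)%nat.
Proof. unfold II; rewrite filter_In, in_seq; lia. Qed.

Lemma sum_scaled_pow2 (l : list nat) (x : R) :
  fold_right Rplus 0 (map (fun i => 2 ^ i * x) l) = INR (list_sum (map (Nat.pow 2) l)) * x.
Proof.
  induction l as [|i l IH]; [cbn; ring|].
  change (list_sum (map (Nat.pow 2) (i :: l))) with (2 ^ i + list_sum (map (Nat.pow 2) l))%nat.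
  cbn [map fold_right]. rewrite IH, plus_INR, pow_INR. replace (INR 2) with 2 by (cbn; ring). ring.
Qed.

Lemma eval_big_mul_II (n : nat) (e : var -> R) : (2 <= n)%nat -> 0 <= e VQ ->
  (forall i, (i <= mm n)%nat -> e (VY i) = Rmax 0 (1 - 2 ^ i * e VQ)) ->
  eval e (big_mul (map y (II n))) = Rmax 0 (1 - (INR n - 1) * e VQ).
Proof.
  intros Hn Hq Hy.
  rewrite (eval_big_mul_trunc e y (fun i => 2 ^ i * e VQ)).
  - rewrite sum_scaled_pow2, sum_pow2_II, minus_INR by lia. reflexivity.
  - intros i Hi. split; [apply Rmult_le_pos; [apply pow_le|]; lra|].
    apply Hy, In_II_le, Hi.
Qed.

Lemma Phi_models_iff (n : nat) (e : var -> R) : (2 <= n)%nat -> valuation e ->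
  (forall f, In f (Phi n) -> eval e f = 1) <->
  (forall i, (i <= mm n)%nat -> e (VY i) = Rmax 0 (1 - 2 ^ i * e VQ)) /\
  e VQ = Rmax 0 (1 - (INR n - 1) * e VQ).
Proof.
  intros Hn He.
  assert (Hchain : eval e (big_meet (map (fun i => FEqv (y i) (FMul (y (i - 1)) (y (i - 1))))
                                         (seq 1 (mm n)))) = 1 <->
    forall i, (1 <= i <= mm n)%nat ->
      e (VY i) = Rmax 0 (e (VY (i - 1)) + e (VY (i - 1)) - 1)).
  { rewrite eval_big_meet_one by exact He. split.
    - intros H i Hi. apply (eval_eqv_one e (y i) (FMul (y (i - 1)) (y (i - 1)))), H, in_map_iff.
      exists i; rewrite in_seq; split; [reflexivity | lia].
    - intros H f Hf. apply in_map_iff in Hf as [i [<- Hi]]; rewrite in_seq in Hi.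
      apply eval_eqv_one; cbn [eval y]; apply H; lia. }
  rewrite <- (Forall_forall (fun f => eval e f = 1)); unfold Phi.
  rewrite !Forall_cons_iff, Forall_nil_iff, !eval_eqv_one, Hchain; cbn [eval y q].
  pose proof (luk_squares_closed_form (fun i => e (VY i)) (e VQ) (mm n) (He VQ)) as Hsq.
  split.
  - intros (H0 & Hrec & Hq & _).
    assert (Hy := proj1 Hsq (conj H0 Hrec)).
    split; [exact Hy|].
    rewrite <- (eval_big_mul_II n e) by (apply He || assumption). exact Hq.
  - intros [Hy Hq].
    destruct (proj2 Hsq Hy) as [H0 Hrec].
    repeat split; [exact H0 | exact Hrec |].
    rewrite (eval_big_mul_II n e) by (apply He || assumption). exact Hq.
Qed.

Definition canonical_model (x : R) (v : var) : R :=
  match v with VQ => x | VY i => Rmax 0 (1 - 2 ^ i * x) end.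

Lemma Phi_defines_inv (n : nat) : (2 <= n)%nat -> implicitly_defines (Phi n) (1 / INR n) VQ.
Proof.
  intros Hn.
  assert (Hr : 2 <= INR n) by (apply (le_INR 2); exact Hn).
  assert (Hx : 0 <= 1 / INR n <= 1).
  { split; [apply Rlt_le, Rdiv_lt_0_compat; lra|].
    unfold Rdiv; rewrite Rmult_1_l, <- Rinv_1. apply Rinv_le_contravar; lra. }
  split.
  - exists (canonical_model (1 / INR n)).
    assert (He : valuation (canonical_model (1 / INR n))).
    { intros [|i]; cbn; [lra|]. pose proof (pow_le 2 i). case_Rmax; nra. }
    split; [exact He|].
    apply Phi_models_iff; [exact Hn | exact He |]. split; [reflexivity|].
    apply luk_fixpoint_inv; cbn; lra.
  - intros e He H. apply Phi_models_iff in H as [_ Hq]; [|exact Hn | exact He].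
    apply luk_fixpoint_inv in Hq; [exact Hq | apply He | lra].
Qed.

Lemma fsize_big_meet_le (l : list form) (B : nat) : (forall f, In f l -> (fsize f <= B)%nat) ->
  (fsize (big_meet l) <= length l * S B + 1)%nat.
Proof.
  induction l as [|f [|g l] IH]; intros H; [cbn; lia | |].
  - pose proof (H f (or_introl eq_refl)); cbn [big_meet length]; lia.
  - change (fsize (big_meet (f :: g :: l))) with (S (fsize f + fsize (big_meet (g :: l)))).
    pose proof (H f (or_introl eq_refl)); pose proof (IH (fun h Hh => H h (or_intror Hh))).
    cbn [length] in *; lia.
Qed.

Lemma fsize_big_mul_le (l : list form) (B : nat) : (forall f, In f l -> (fsize f <= B)%nat) ->
  (fsize (big_mul l) <= length l * S B + 1)%nat.
Proof.
  induction l as [|f [|g l] IH]; intros H; [cbn; lia | |].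
  - pose proof (H f (or_introl eq_refl)); cbn [big_mul length]; lia.
  - change (fsize (big_mul (f :: g :: l))) with (S (fsize f + fsize (big_mul (g :: l)))).
    pose proof (H f (or_introl eq_refl)); pose proof (IH (fun h Hh => H h (or_intror Hh))).
    cbn [length] in *; lia.
Qed.

Lemma fsize_y_le (i : nat) : (fsize (y i) <= S i)%nat.
Proof. cbn [fsize y var_size]. pose proof (Nat.log2_lt_lin (S i) ltac:(lia)); lia. Qed.

Lemma Phi_size_le (n : nat) : (2 <= n)%nat ->
  (set_size (Phi n) <= 20 * (Nat.log2 n + 1) ^ 2)%nat.
Proof.
  intros Hn. set (m := mm n).
  assert (Hm : (m <= Nat.log2 n)%nat) by (apply Nat.log2_le_mono; lia).
  assert (Hchain : (fsize (big_meet (map (fun i => FEqv (y i) (FMul (y (i - 1)) (y (i - 1))))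
                                         (seq 1 m))) <= m * S (3 * m + 5) + 1)%nat).
  { etransitivity; [apply fsize_big_meet_le with (B := (3 * m + 5)%nat)|].
    - intros f Hf. apply in_map_iff in Hf as [i [<- Hi]]; rewrite in_seq in Hi.
      cbn [fsize]; pose proof (fsize_y_le i); pose proof (fsize_y_le (i - 1)); lia.
    - rewrite length_map, length_seq; lia. }
  assert (Hprod : (fsize (big_mul (map y (II n))) <= S m * S (S m) + 1)%nat).
  { assert (Hlen : (length (map y (II n)) <= S m)%nat).
    { rewrite length_map; unfold II.
      etransitivity; [apply filter_length_le | rewrite length_seq; reflexivity]. }
    etransitivity; [apply fsize_big_mul_le with (B := S m)|].
    - intros f Hf. apply in_map_iff in Hf as [i [<- Hi]].
      pose proof (fsize_y_le i); pose proof (In_II_le n i Hi); unfold m; lia.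
    - nia. }
  unfold set_size, Phi; cbn [fold_right fsize y q var_size]. fold m.
  rewrite Nat.log2_1, Nat.pow_2_r. nia.
Qed.

Theorem lemma4p2 :
  (forall n : nat, (2 <= n)%nat -> implicitly_defines (Phi n) (1 / INR n) VQ) /\
  (exists c k : nat, forall n : nat, (2 <= n)%nat ->
     (set_size (Phi n) <= c * (Nat.log2 n + 1) ^ k)%nat).
Proof.
  split; [exact Phi_defines_inv|].
  exists 20%nat, 2%nat. exact Phi_size_le.
Qed.
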